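(* Fix a nonabelian finite simple group $S$, a positive integer $t$ and a prime $p$, and set $N=S^t$. Assume that every coset of $S$ in $\mathrm{Aut}(S)$ contains an $S$-conjugacy class of $p$-elements of size at least $M$. Then $f_p(N)\ge M^t$.
   Context: For a subset $X$ of a finite group, $\mathrm{Ord}(X,p)$ is the set of elements of $X$ of $p$-power order. For $N=S^t$ with $S$ nonabelian simple, $f_p(N)=\min\{|\mathrm{Ord}(N\alpha,p)| : \alpha \in \mathrm{Aut}(N) \text{ a } p\text{-element}\}$, where $N$ is identified with $\mathrm{Inn}(N)\le\mathrm{Aut}(N)$ and $S$ with $\mathrm{Inn}(S)\le\mathrm{Aut}(S)$. *)

From mathcomp Require Import all_boot all_fingroup all_solvable.
Set Implicit Arguments. Unset Strict Implicit. Unset Printing Implicit Defensive.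
Local Open Scope group_scope.

Definition Inn (gT : finGroupType) (G : {group gT}) : {set {perm gT}} :=
  [set conj_aut G x | x in G].

Definition Ord (T : finGroupType) (X : {set T}) (p : nat) : {set T} :=
  [set x in X | p.-elt x].

(* The default value #|Inn N| of the min is harmless: every term is
   bounded by the size of the coset Inn(N) alpha, i.e. by #|Inn N|, and the
   index set is nonempty (alpha = 1). *)
Definition f_p (gT : finGroupType) (N : {group gT}) (p : nat) : nat :=
  \big[minn/#|Inn N|]_(a in Aut N | p.-elt a) #|Ord (Inn N :* a) p|.

From mathcomp Require Import all_boot all_fingroup all_solvable.
Set Implicit Arguments. Unset Strict Implicit. Unset Printing Implicit Defensive.
Local Open Scope group_scope.

(* Let a be a p-element of Aut(N), N = T_1 x ... x T_t with T_i ~ S.  The T_i are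
   the simple normal subgroups of N, so a permutes them: a(T_i) = T_(pi i).  Fix a
   root r in each pi-orbit, of length m r.  Then a^(m r) stabilises T_r, and the
   hypothesis, transported from S to T_r, gives z_r in T_r such that
   x_r : u |-> a^(m r)(u^(z_r)) is, on T_r, of p-power order with at most |S|/M
   fixed points (class equation |x^Inn(G)| |C_G(x)| = |G| for centerless G).  With
   n the product of the z_r and g = conj(n) a in Inn(N) a, conjugation by n is seen
   only at the roots, so g^(m r) = x_r on T_r.  Hence g is a p-element, and a fixed
   point of g is determined by its root coordinates, each fixed by x_r: this gives
   M^t |C_N(g)| <= |S|^t = |N|, so the Inn(N)-class of g, which lies in
   Ord(Inn(N) a, p), has at least M^t elements. *)

Definition fixset (gT : finGroupType) (G : {set gT}) (x : {perm gT}) : {set gT} :=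
  [set y in G | x y == y].

Lemma simple_center1 (gT : finGroupType) (G : {group gT}) :
  simple G -> ~~ abelian G -> 'Z(G) = 1.
Proof.
case/simpleP=> _ simG; case: (simG _ (center_normal G)) => // defZ.
by rewrite -defZ center_abelian.
Qed.

Lemma eq_pow_on (T : finType) (A : {pred T}) (x y : {perm T}) :
  {in A, x =1 y} -> {in A, forall u, y u \in A} -> forall k, {in A, x ^+ k =1 y ^+ k}.
Proof.
move=> eq_xy stabA k; have stabAk j u : u \in A -> (y ^+ j) u \in A.
  by elim: j => [|j IHj] Au; rewrite ?expg0 ?perm1 // expgSr permM stabA ?IHj.
elim: k => [|k IHk] u Au; first by rewrite !expg0.
by rewrite !expgSr !permM IHk // eq_xy ?stabAk.
Qed.

Section InnerAutomorphisms.
Variables (gT : finGroupType) (G : {group gT}).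

Lemma Inn_morphim : Inn G = conj_aut G @* G.
Proof. by rewrite morphimEsub ?normG. Qed.

Lemma Inn_group_set : group_set (Inn G).
Proof. by rewrite Inn_morphim groupP. Qed.

Canonical Inn_group := Group Inn_group_set.

Lemma conj_aut_Aut x y : x \in Aut G -> y \in G ->
  conj_aut G y ^ x = conj_aut G (x y).
Proof.
move=> AutGx Gy; have AutGx1 : x^-1 \in Aut G by rewrite groupV.
apply: (eq_Aut (A := G)); rewrite ?groupJ ?Aut_aut // => z Gz.
rewrite conjgE !permM conj_autE ?conj_autE ?Aut_closed //.
by rewrite -(autmE AutGx) morphJ ?Aut_closed //= autmE -permM mulVg perm1.
Qed.

Lemma Aut_norm_Inn : Aut G \subset 'N(Inn G).
Proof.
apply/subsetP=> x AutGx; rewrite inE; apply/subsetP=> _ /imsetP[_ /imsetP[y Gy ->] ->].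
by rewrite conj_aut_Aut //; apply: imset_f; apply: Aut_closed.
Qed.

Lemma Inn_sub_Aut : Inn G \subset Aut G.
Proof. by rewrite Inn_morphim Aut_conj_aut. Qed.

Lemma class_Inn_Ord a x (p : nat) : a \in Aut G -> x \in Inn G :* a -> p.-elt x ->
  x ^: Inn G \subset Ord (Inn G :* a) p.
Proof.
move=> AutGa xInna px; have AutGx : x \in Aut G.
  by case/rcosetP: xInna => c /(subsetP Inn_sub_Aut) Autc ->; rewrite groupM.
apply/subsetP=> _ /imsetP[c Innc ->]; rewrite inE p_eltJ px andbT.
rewrite -(rcoset_eqP xInna) mem_rcoset conjgE -!mulgA groupMl ?groupV //.
have -> : x * (c * x^-1) = c ^ x^-1 by rewrite conjgE invgK mulgA.
by rewrite memJ_norm ?groupV ?(subsetP Aut_norm_Inn).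
Qed.

Lemma conj_aut_inj : 'Z(G) = 1 -> {in G &, injective (conj_aut G)}.
Proof.
move=> ZG y z Gy Gz eq_yz; apply/eqP; rewrite eq_mulgV1; apply/eqP/set1gP; rewrite -ZG.
have nGG := subsetP (normG G).
rewrite inE groupM ?groupV //= -ker_conj_aut; apply/kerP; rewrite ?groupM ?groupV ?nGG //.
by rewrite morphM ?groupV ?nGG //= morphV ?nGG //= eq_yz mulgV.
Qed.

(* Class equation for automorphisms of a centerless group: the centraliser of x in
   Inn(G) corresponds to the fixed points of x in G. *)
Lemma card_class_Inn x : 'Z(G) = 1 -> x \in Aut G ->
  (#|x ^: Inn G| * #|fixset G x|)%N = #|G|.
Proof.
move=> ZG AutGx; have injc := conj_aut_inj ZG.
have cardInn : #|Inn G| = #|G| by rewrite card_in_imset.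
have defC : 'C_(Inn G)[x] = conj_aut G @: fixset G x.
  apply/setP=> c; apply/setIP/imsetP=> [[/imsetP[y Gy ->] /cent1P cxy] | [y]].
    move/commgP/conjg_fixP: cxy; rewrite conj_aut_Aut // => /injc xy.
    by exists y; rewrite // inE Gy xy ?Aut_closed ?eqxx.
  move=> /setIdP[Gy /eqP xy] ->; split; first exact: imset_f.
  by apply/cent1P/commgP/conjg_fixP; rewrite conj_aut_Aut // xy.
rewrite -index_cent1 -cardInn -(Lagrange (subsetIl (Inn G) 'C[x])) mulnC.
congr (_ * _)%N; rewrite /= defC card_in_imset // => y z /setIdP[Gy _] /setIdP[Gz _].
exact: injc.
Qed.

End InnerAutomorphisms.

Section DirectProduct.
Variables (hT : finGroupType) (t : nat) (N : {group hT}) (T : 'I_t -> {group hT}).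
Hypotheses (defN : \big[dprod/1]_(i < t) T i = N)
  (simT : forall i, simple (T i)) (nabT : forall i, ~~ abelian (T i)).

Lemma center_factor i : 'Z(T i) = 1.
Proof. exact: simple_center1. Qed.

Lemma factor_neq1 i : T i :!=: 1.
Proof. by case/simpleP: (simT i). Qed.

Lemma center_N : 'Z(N) = 1.
Proof. by rewrite -(center_bigdprod defN) big1 // => i _; apply: center_factor. Qed.

Definition cofactor i := <<\bigcup_(j | j != i) T j>>%G.

Lemma cofactor_dprod i : T i \x cofactor i = N.
Proof.
move: defN; rewrite (bigD1 i) //= => defTi.
have [[_ K _ defK] _ _ _] := dprodP defTi.
by rewrite /cofactor (bigdprodWY defK) -defK.
Qed.

Lemma normal_factor i : T i <| N.
Proof. by case: (dprod_normal2 (cofactor_dprod i)). Qed.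

Lemma sub_factor i : T i \subset N.
Proof. exact: normal_sub (normal_factor i). Qed.

Lemma sub_cofactor i j : j != i -> T j \subset cofactor i.
Proof. by move=> nji; rewrite sub_gen // (bigcup_sup j). Qed.

Lemma factor_inj : injective T.
Proof.
move=> i j eqT; apply: contraTeq (factor_neq1 i) => nij; rewrite negbK.
have [_ _ _ <-] := dprodP (cofactor_dprod i).
by apply/eqP/esym/setIidPl; rewrite eqT sub_cofactor // eq_sym.
Qed.

Definition coord i := divgr (T i) (cofactor i).

Lemma coordT i x : x \in N -> coord i x \in T i.
Proof. by have [_ <- _ _] := dprodP (cofactor_dprod i); apply: mem_divgr. Qed.

Lemma coordM i : {in N &, {morph coord i : x y / x * y}}.
Proof.
have [_ defN_i cTK tiTK] := dprodP (cofactor_dprod i).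
by apply: divgrM cTK; apply/complP.
Qed.

Canonical coord_morphism i := Morphism (coordM i).

Lemma coord_id i x y : x \in T i -> y \in cofactor i -> coord i (x * y) = x.
Proof. by have [_ _ _ tiTK] := dprodP (cofactor_dprod i); apply: divgrMid. Qed.

Lemma coord1_cofactor i x : x \in N -> coord i x = 1 -> x \in cofactor i.
Proof.
have [_ defN_i _ _] := dprodP (cofactor_dprod i).
by move=> Nx x_i1; rewrite (divgr_eq (T i) (cofactor i) x) -/(coord i x) x_i1 mul1g
  mem_remgr ?defN_i.
Qed.

Lemma coord_inj x y : x \in N -> y \in N -> (forall i, coord i x = coord i y) -> x = y.
Proof.
move=> Nx Ny eq_xy; apply/eqP; rewrite eq_mulgV1; apply/eqP/set1gP; rewrite -center_N.
have Nxy : x * y^-1 \in N by rewrite groupM ?groupV.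
rewrite inE Nxy -(bigdprodWY defN) cent_gen; apply/centP=> z /bigcupP[i _ Tz].
have [_ _ cTK _] := dprodP (cofactor_dprod i); apply: (centP (subsetP cTK _ _)) => //.
by apply: coord1_cofactor; rewrite // morphM ?groupV //= morphV //= eq_xy mulgV.
Qed.

Lemma coord_prod (c : 'I_t -> hT) j :
  (forall i, c i \in T i) -> coord j (\prod_(i < t) c i) = c j.
Proof.
move=> Tc; have Nc i : c i \in N by apply: (subsetP (sub_factor i)).
rewrite (morph_prod (coord_morphism j)) // (eq_bigr (fun i => if i == j then c j else 1)).
  by rewrite -big_mkcond big_pred1_eq.
move=> i _ /=; case: eqP => [-> | /eqP nij]; first by rewrite -{1}[c j]mulg1 coord_id.
by rewrite -[c i]mul1g coord_id ?(subsetP (sub_cofactor nij)).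
Qed.

Lemma conj_coord j u n : u \in T j -> n \in N -> u ^ n = u ^ coord j n.
Proof.
have [_ defN_j cTK _] := dprodP (cofactor_dprod j).
move=> Tu Nn; rewrite {1}(divgr_eq (T j) (cofactor j) n) conjgM -/(coord j n).
apply/conjg_fixP/commgP/commute_sym; apply: (centsP cTK).
  by rewrite mem_remgr ?defN_j.
by rewrite memJ_norm ?coordT // (subsetP (normG _)) ?coordT.
Qed.

Lemma simple_normal_factor (H : {group hT}) : H <| N -> simple H -> exists j, H :=: T j.
Proof.
move=> nsHN /simpleP[ntH simH].
have [j ntHTj | trivHT] := pickP [pred j | H :&: T j != 1].
  have [_ simTj] := simpleP _ (simT j).
  have nsHTj : H :&: T j <| T j.
    exact: normalS (subsetIr _ _) (sub_factor j) (normalI nsHN (normal_factor j)).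
  have [HTj1 | defHTj] := simTj _ nsHTj; first by rewrite /= HTj1 eqxx in ntHTj.
  have sTjH : T j \subset H by rewrite -defHTj subsetIl.
  have nsTjH : T j <| H := normalS sTjH (normal_sub nsHN) (normal_factor j).
  have [Tj1 | defTj] := simH _ nsTjH; last by exists j; rewrite defTj.
  by have := factor_neq1 j; rewrite Tj1 eqxx.
case/eqP: ntH; apply/trivgP; rewrite -center_N subsetI normal_sub //=.
rewrite -(bigdprodWY defN) cent_gen centsC; apply/bigcupsP=> j _.
rewrite centsC; apply/commG1P/trivgP.
have /negbFE/eqP <- := trivHT j; apply: commg_subI; rewrite subsetI subxx.
  exact: subset_trans (normal_sub nsHN) (normal_norm (normal_factor j)).
exact: subset_trans (sub_factor j) (normal_norm nsHN).
Qed.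

Lemma Aut_factor a i : a \in Aut N -> exists j, a @: T i = T j.
Proof.
move=> AutNa; have <- : autm AutNa @* T i = a @: T i by rewrite morphimEsub ?sub_factor.
apply: simple_normal_factor.
  by have := morphim_normal (autm_morphism AutNa) (normal_factor i); rewrite im_autm.
by rewrite -(isog_simple (sub_isog (sub_factor i) (injm_autm AutNa))).
Qed.

Definition factor_perm (a : {perm hT}) i := odflt i [pick j | a @: T i == T j].

Lemma factor_permP a i : a \in Aut N -> a @: T i = T (factor_perm a i).
Proof.
move=> AutNa; rewrite /factor_perm; case: pickP => [j /eqP // | noj].
by have [j aTi] := Aut_factor i AutNa; have := noj j; rewrite aTi eqxx.
Qed.

Lemma factor_perm_eq a i j : a \in Aut N -> a @: T i = T j -> factor_perm a i = j.
Proof. by move=> AutNa aTi; apply/factor_inj/val_inj; rewrite /= -factor_permP. Qed.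

Lemma factor_perm_inj a : a \in Aut N -> injective (factor_perm a).
Proof.
move=> AutNa i j eq_ij; apply: factor_inj; apply: val_inj => /=.
by apply: (imset_inj (@perm_inj _ a)); rewrite !factor_permP // eq_ij.
Qed.

Lemma factor_perm_iter a k i : a \in Aut N ->
  (a ^+ k) @: T i = T (iter k (factor_perm a) i).
Proof.
move=> AutNa; elim: k => [|k IHk]; first by rewrite expg0 (eq_imset _ (@perm1 _)) imset_id.
by rewrite expgSr (eq_imset _ (permM _ _)) imset_comp IHk factor_permP.
Qed.

Lemma Aut_cofactor a j x : a \in Aut N -> x \in cofactor j ->
  a x \in cofactor (factor_perm a j).
Proof.
move=> AutNa; have sKj: cofactor j \subset autm AutNa @*^-1 cofactor (factor_perm a j).
  rewrite gen_subG; apply/bigcupsP=> l nlj; apply/subsetP=> u Tu.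
  rewrite !inE (subsetP (sub_factor l) u Tu) /= autmE.
  apply: (subsetP (@sub_cofactor (factor_perm a j) (factor_perm a l) _)).
    by rewrite (inj_eq (factor_perm_inj AutNa)).
  by rewrite -factor_permP // imset_f.
by move/(subsetP sKj); rewrite !inE => /andP[].
Qed.

Lemma coord_Aut a j y : a \in Aut N -> y \in N ->
  coord (factor_perm a j) (a y) = a (coord j y).
Proof.
have [_ defN_j _ _] := dprodP (cofactor_dprod j).
move=> AutNa Ny; set r := remgr (T j) (cofactor j) y.
have Kr : r \in cofactor j by rewrite mem_remgr ?defN_j.
have Nr : r \in N by apply: (subsetP _ _ Kr); rewrite -defN_j mulG_subr.
have Nyj : coord j y \in N by rewrite (subsetP (sub_factor j)) ?coordT.
rewrite {1}(divgr_eq (T j) (cofactor j) y) -/(coord j y) -/r -(autmE AutNa) morphM //=.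
by rewrite autmE coord_id ?Aut_cofactor // -factor_permP // imset_f ?coordT.
Qed.

End DirectProduct.

Section Transport.
Variables (gT hT : finGroupType) (S : {group gT}) (G H : {group hT}).
Variable phi : {morphism S >-> hT}.
Hypotheses (injphi : 'injm phi) (imphi : phi @* S = H) (sHG : H \subset G).

Lemma transport_mem s : s \in S -> phi s \in H.
Proof. by move=> Ss; rewrite -imphi mem_morphim. Qed.

Lemma Aut_transport beta : beta \in Aut G -> beta @: H = H ->
  exists2 b, b \in Aut S & {in S, forall s, phi (b s) = beta (phi s)}.
Proof.
move=> AutGb bH; pose f s := invm injphi (beta (phi s)).
have betaH s : s \in S -> beta (phi s) \in H.
  by move=> Ss; rewrite -bH imset_f ?transport_mem.
have phif s : s \in S -> phi (f s) = beta (phi s).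
  by move=> Ss; rewrite invmK ?imphi ?betaH.
have fS s : s \in S -> f s \in S.
  by move/betaH; rewrite /f -imphi => /morphimP[s2 _ S2 ->]; rewrite invmE.
have injf : {in S &, injective f}.
  move=> s1 s2 S1 S2 /(congr1 phi); rewrite !phif // => /perm_inj.
  exact: (injmP injphi).
have sfS : f @: S \subset S by apply/subsetP=> _ /imsetP[s Ss ->]; apply: fS.
exists (perm_in injf sfS) => [|s Ss]; last by rewrite perm_inE ?phif.
rewrite inE perm_in_on; apply/morphicP=> s1 s2 S1 S2.
rewrite !perm_inE ?groupM //; apply: (injmP injphi); rewrite ?fS ?groupM ?fS //.
have GS s : s \in S -> phi s \in G by move=> Ss; rewrite (subsetP sHG) ?transport_mem.
by rewrite morphM ?fS // !phif ?groupM // morphM // -(autmE AutGb) morphM ?GS.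
Qed.

End Transport.

Section LocalWitness.
Variables (gT hT : finGroupType) (S : {group gT}) (p M : nat) (G H : {group hT}).
Hypotheses (ZS : 'Z(S) = 1) (isoHS : H \isog S) (sHG : H \subset G).
Hypothesis cosetS : forall b, b \in Aut S ->
  exists2 x, x \in Inn S :* b & p.-elt x && (M <= #|x ^: Inn S|).

(* The hypothesis on the cosets of Inn(S), read in a copy H of S inside G: every
   automorphism beta of G stabilising H can be corrected by an inner automorphism of
   G, induced by some z in H, so that on H it becomes a p-element of order dividing
   #|Aut S|_p with at most #|S|/M fixed points. *)
Lemma local_witness beta : beta \in Aut G -> beta @: H = H ->
  exists2 z, z \in H &
    {in H, forall u, ((conj_aut G z * beta) ^+ #|Aut S|`_p) u = u}
    /\ (M * #|fixset H (conj_aut G z * beta)| <= #|S|)%N.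
Proof.
move=> AutGb bH; have /isogP[phi injphi imphi] : S \isog H by rewrite isog_sym.
have [b AutSb phib] := Aut_transport injphi imphi sHG AutGb bH.
have [_ /rcosetP[_ /imsetP[s0 Ss0 ->] ->] /andP[px Mx]] := cosetS AutSb.
have AutSx : conj_aut S s0 * b \in Aut S by rewrite groupM ?Aut_aut.
set x := conj_aut S s0 * b in px Mx AutSx *; set y := conj_aut G (phi s0) * beta.
have GS s : s \in S -> phi s \in G by move=> Ss; rewrite (subsetP sHG) ?transport_mem.
have phix s : s \in S -> phi (x s) = y (phi s).
  move=> Ss; rewrite !permM conj_autE // phib ?groupJ // morphJ //.
  by rewrite conj_autE ?GS.
have phixn k s : s \in S -> phi ((x ^+ k) s) = (y ^+ k) (phi s).
  elim: k s => [|k IHk] s Ss; first by rewrite !expg0 !perm1.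
  rewrite !expgSr [(x ^+ k * x) s]permM [(y ^+ k * y) _]permM -IHk // phix //.
  by rewrite Aut_closed ?groupX.
exists (phi s0); first exact: transport_mem.
split=> [u | ].
  rewrite -imphi => /morphimP[s _ Ss ->].
  have: x ^+ #|Aut S|`_p = 1.
    apply/eqP; rewrite -order_dvdn -(part_pnat_id px) partn_dvd ?order_dvdG //.
  by move=> xq; rewrite -phixn // xq perm1.
have -> : fixset H y = phi @: fixset S x.
  apply/setP=> u; apply/setIdP/imsetP=> [[] | [s /setIdP[Ss /eqP xs] ->]].
    rewrite -imphi => /morphimP[s _ Ss ->] /eqP ys; exists s => //.
    by rewrite inE Ss; apply/eqP/(injmP injphi); rewrite ?phix ?Aut_closed.
  by rewrite transport_mem // -phix // xs.
rewrite card_in_imset; last first.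
  by move=> s1 s2 /setIdP[S1 _] /setIdP[S2 _]; apply: (injmP injphi).
by rewrite -(card_class_Inn ZS AutSx) leq_mul2r Mx orbT.
Qed.

End LocalWitness.

Section Orbits.
Variables (I : finType) (f : I -> I).
Hypothesis injf : injective f.

Definition orbit_root i := froot f i == i.

Lemma orbit_root_froot i : orbit_root (froot f i).
Proof. by rewrite /orbit_root (root_root (fconnect_sym injf)). Qed.

Lemma iter_froot i : iter (findex f (froot f i) i) f (froot f i) = i.
Proof. by apply: iter_findex; rewrite (fconnect_sym injf) connect_root. Qed.

Lemma orbit_root_iter r k : orbit_root r -> 0 < k < fingraph.order f r ->
  ~~ orbit_root (iter k f r).
Proof.
move=> rootr /andP[k_gt0 lt_k_r]; rewrite /orbit_root.
have /rootP <- := fconnect_iter f k r; last exact: fconnect_sym.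
rewrite (eqP rootr); apply: contraTneq k_gt0 => eq_r.
by rewrite -(findex_iter lt_k_r) -eq_r findex0.
Qed.

Lemma order_dvdn_iter i n : iter n f i = i -> fingraph.order f i %| n.
Proof.
have iter_mul k : iter (k * fingraph.order f i) f i = i.
  by elim: k => // k IHk; rewrite mulSn iterD IHk iter_order.
rewrite {1}(divn_eq n (fingraph.order f i)) addnC iterD iter_mul => fi.
have := findex_iter (ltn_pmod n (fingraph.order_gt0 f i)).
by rewrite fi findex0 /dvdn => <-.
Qed.

End Orbits.

Section Construction.
Variables (gT hT : finGroupType) (S : {group gT}) (t p M : nat)
  (N : {group hT}) (T : 'I_t -> {group hT}).
Hypotheses (simS : simple S) (nabS : ~~ abelian S)
  (defN : \big[dprod/1]_(i < t) T i = N) (isoT : forall i, T i \isog S).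
Hypothesis cosetS : forall b, b \in Aut S ->
  exists2 x, x \in Inn S :* b & p.-elt x && (M <= #|x ^: Inn S|).

Lemma simT i : simple (T i). Proof. by rewrite (isog_simple (isoT i)). Qed.
Lemma nabT i : ~~ abelian (T i). Proof. by rewrite (isog_abelian (isoT i)). Qed.

Variable a : {perm hT}.
Hypotheses (AutNa : a \in Aut N) (pa : p.-elt a).

Local Notation pi := (factor_perm T a).
Local Notation m i := (fingraph.order pi i).
Local Notation q := (#|Aut S|`_p)%N.
Local Notation base := (orbit_root pi).

Lemma pi_inj : injective pi.
Proof. exact: (factor_perm_inj defN simT nabT AutNa). Qed.

Lemma pi_factor k i : (a ^+ k) @: T i = T (iter k pi i).
Proof. exact: (factor_perm_iter defN simT nabT k i AutNa). Qed.

Lemma a_orbit_stab i : (a ^+ m i) @: T i = T i.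
Proof. by rewrite pi_factor iter_order //; apply: pi_inj. Qed.

Definition good_corr i z := let x := conj_aut N z * a ^+ m i in
  [&& z \in T i, [forall (u | u \in T i), (x ^+ q) u == u]
    & (M * #|fixset (T i) x| <= #|S|)%N].

Definition corr i := odflt 1 [pick z | good_corr i z].

Lemma corrP i : good_corr i (corr i).
Proof.
rewrite /corr; case: pickP => [// | nogood].
have AutNam : a ^+ m i \in Aut N by rewrite groupX.
have [z Tz [xq Mx]] := local_witness (simple_center1 simS nabS) (isoT i)
  (sub_factor defN i) cosetS AutNam (a_orbit_stab i).
have := nogood z; rewrite /good_corr Tz Mx andbT => /negbT/negP[].
by apply/forall_inP=> u /xq->.
Qed.

Lemma corrT i : corr i \in T i.
Proof. by case/and3P: (corrP i). Qed.

Local Notation xloc i := (conj_aut N (corr i) * a ^+ m i).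

Lemma xloc_order i u : u \in T i -> ((xloc i) ^+ q) u = u.
Proof. by case/and3P: (corrP i) => _ /forall_inP xq _ /xq/eqP. Qed.

Lemma xloc_fix i : (M * #|fixset (T i) (xloc i)| <= #|S|)%N.
Proof. by case/and3P: (corrP i). Qed.

(* The corrections at the orbit roots gather into one element n = corr_prod of N,
   giving g = corr_aut = conj(n) a in the coset Inn(N) a. *)
Definition corr_root i := if base i then corr i else 1.
Definition corr_prod := \prod_(i < t) corr_root i.
Definition corr_aut := conj_aut N corr_prod * a.

Lemma corr_rootT i : corr_root i \in T i.
Proof. by rewrite /corr_root; case: ifP; rewrite ?corrT. Qed.

Lemma corr_prodN : corr_prod \in N.
Proof. by apply: group_prod => i _; rewrite (subsetP (sub_factor defN i)) ?corr_rootT. Qed.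

Lemma conj_corr_prod j u : u \in T j -> u ^ corr_prod = u ^ corr_root j.
Proof.
move=> Tu; rewrite (conj_coord defN Tu corr_prodN) (coord_prod defN) //.
exact: corr_rootT.
Qed.

Lemma corr_aut_coset : corr_aut \in Inn N :* a.
Proof. by rewrite mem_rcoset mulgK imset_f ?corr_prodN. Qed.

Lemma Aut_corr_aut : corr_aut \in Aut N.
Proof. by rewrite groupM ?Aut_aut. Qed.

Lemma corr_autE u : u \in N -> corr_aut u = a (u ^ corr_prod).
Proof. by move=> Nu; rewrite permM conj_autE ?corr_prodN. Qed.

Lemma corr_aut_factor k : corr_aut @: T k = T (pi k).
Proof.
rewrite (eq_imset _ (permM _ _)) imset_comp -(factor_permP defN simT nabT k AutNa).
congr (_ @: _); rewrite (eq_in_imset (g := conjg^~ corr_prod)); last first.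
  by move=> u Tu; rewrite conj_autE ?corr_prodN ?(subsetP (sub_factor defN k)).
by have /normalP[_ nTN] := normal_factor defN k; rewrite -{2}(nTN corr_prod corr_prodN).
Qed.

Lemma corr_aut_iter k i : (corr_aut ^+ k) @: T i = T (iter k pi i).
Proof.
elim: k => [|k IHk]; first by rewrite expg0 (eq_imset _ (@perm1 _)) imset_id.
by rewrite expgSr (eq_imset _ (permM _ _)) imset_comp IHk corr_aut_factor.
Qed.

(* Along the orbit of a root r, conjugation by n acts only at r itself, so that
   g^(m r) agrees on T r with the corrected automorphism x_r. *)
Lemma corr_aut_pow_root r : base r -> {in T r, corr_aut ^+ m r =1 xloc r}.
Proof.
move=> rootr u Tu; have NT j : {subset T j <= N} by apply/subsetP/sub_factor.
have pow_iter k : k < m r -> (corr_aut ^+ k.+1) u = (a ^+ k.+1) (u ^ corr r).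
  elim: k => [_ | k IHk lt_k_r].
    rewrite expg1 corr_autE ?(NT r) // [u ^ corr_prod](conj_corr_prod Tu).
    by rewrite /corr_root rootr.
  rewrite expgSr permM IHk 1?ltnW //.
  have Tw : (a ^+ k.+1) (u ^ corr r) \in T (iter k.+1 pi r).
    by rewrite -pi_factor imset_f // groupJ ?corrT.
  have notroot := orbit_root_iter pi_inj rootr (_ : 0 < k.+1 < m r).
  rewrite corr_autE ?(NT _ _ Tw) // [_ ^ corr_prod](conj_corr_prod Tw) /corr_root.
  by rewrite ifN ?conjg1 -?permM -?expgSr ?notroot.
have m_gt0 : 0 < m r := fingraph.order_gt0 pi r.
by rewrite -(prednK m_gt0) pow_iter ?prednK // permM conj_autE ?(NT r) ?corrT.
Qed.

Lemma xloc_stab i u : u \in T i -> xloc i u \in T i.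
Proof.
move=> Tu; rewrite permM conj_autE ?(subsetP (sub_factor defN i)) ?corrT //.
by rewrite -[in X in _ \in X](a_orbit_stab i) imset_f // groupJ ?corrT.
Qed.

Lemma m_dvd_order r : m r %| #[a].
Proof.
apply: (order_dvdn_iter pi_inj); apply: (factor_inj defN simT); apply: val_inj.
by rewrite /= -pi_factor expg_order (eq_imset _ (@perm1 _)) imset_id.
Qed.

(* g^(#[a] q) fixes every factor pointwise: at a root r this is x_r^q = 1, and the
   other factors of the orbit are images of T r under powers of g. *)
Lemma corr_aut_pow_id j u : u \in T j -> (corr_aut ^+ (#[a] * q)) u = u.
Proof.
pose r := froot pi j; have rootr : base r := orbit_root_froot pi_inj j.
have fix_r w : w \in T r -> (corr_aut ^+ (#[a] * q)) w = w.
  move=> Tw; have -> : (#[a] * q = m r * q * (#[a] %/ m r))%N.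
    by rewrite mulnAC [(m r * _)%N]mulnC divnK ?m_dvd_order.
  rewrite expgM permX_fix // expgM (eq_pow_on (corr_aut_pow_root rootr) (@xloc_stab r)) //.
  exact: xloc_order.
move: u; rewrite -(iter_froot pi_inj j) -corr_aut_iter => _ /imsetP[w Tw ->].
by rewrite -permM -expgD addnC expgD permM fix_r.
Qed.

Lemma corr_aut_p_elt : p.-elt corr_aut.
Proof.
have Aut_pow : corr_aut ^+ (#[a] * q) \in Aut N by rewrite groupX ?Aut_corr_aut.
have pow_E1 : corr_aut ^+ (#[a] * q) = 1.
  apply: (eq_Aut (A := N)) => // y; rewrite -(bigdprodW defN) => /prodsgP[c Tc ->].
  rewrite perm1 -(autmE Aut_pow) morph_prod => [|i _]; last first.
    by rewrite (subsetP (sub_factor defN i)) ?Tc.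
  by apply: eq_bigr => i _; rewrite /= autmE (corr_aut_pow_id (Tc i _)).
have pE : p.-nat (#[a] * q)%N by rewrite pnatM part_pnat andbT.
by apply: pnat_dvd pE; rewrite order_dvdn pow_E1.
Qed.

Lemma corr_aut_factor_perm k : factor_perm T corr_aut k = pi k.
Proof. exact: (factor_perm_eq defN simT nabT Aut_corr_aut (corr_aut_factor k)). Qed.

Lemma coord_fix_iter y k j : y \in fixset N corr_aut ->
  coord T (iter k pi j) y = (corr_aut ^+ k) (coord T j y).
Proof.
case/setIdP=> Ny /eqP gy; elim: k => [|k IHk]; first by rewrite expg0 perm1.
rewrite iterS -{1}gy -(corr_aut_factor_perm (iter k pi j)).
rewrite (coord_Aut defN simT nabT) ?Aut_corr_aut //.
by rewrite IHk -permM -expgSr.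
Qed.

(* A fixed point of g is encoded by its coordinates at the roots, the coordinate at
   a root r being a fixed point of x_r. *)
Definition root_fix i : {set hT} := if base i then fixset (T i) (xloc i) else [set 1].
Definition root_coords y : {ffun 'I_t -> hT} :=
  [ffun i => if base i then coord T i y else 1].

Lemma root_coords_inj : {in fixset N corr_aut &, injective root_coords}.
Proof.
move=> y1 y2 fix1 fix2 /ffunP eq12.
have /setIdP[N1 _] := fix1; have /setIdP[N2 _] := fix2.
apply: (coord_inj defN simT nabT N1 N2) => j; rewrite -(iter_froot pi_inj j).
have := eq12 (froot pi j); rewrite !ffunE orbit_root_froot //; last exact: pi_inj.
by rewrite !coord_fix_iter // => ->.
Qed.

Lemma root_coords_fam y : y \in fixset N corr_aut -> root_coords y \in family root_fix.
Proof.
move=> fixy; have /setIdP[Ny _] := fixy; apply/familyP=> i; rewrite ffunE /root_fix.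
case: ifP => rooti; last exact: set11.
have Tyi : coord T i y \in T i by apply: (coordT defN).
rewrite inE Tyi -(corr_aut_pow_root rooti Tyi) -coord_fix_iter //.
by rewrite iter_order ?eqxx //; apply: pi_inj.
Qed.

Lemma card_fixset_corr_aut : (#|fixset N corr_aut| <= \prod_(i < t) #|root_fix i|)%N.
Proof.
have sub_fam : root_coords @: fixset N corr_aut \subset family root_fix.
  by apply/subsetP=> _ /imsetP[y fixy ->]; apply: root_coords_fam.
rewrite -(card_in_imset root_coords_inj) (leq_trans (subset_leq_card sub_fam)) //.
by rewrite card_family foldrE big_map big_enum.
Qed.

(* M is at most #|S| (take the coset Inn(S) itself), which bounds the non-root
   factors. *)
Lemma M_le_S : (M <= #|S|)%N.
Proof.
have [x _ /andP[_ Mx]] := cosetS (group1 [Aut S]).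
by rewrite (leq_trans Mx) // (leq_trans (leq_imset_card _ _)) ?leq_imset_card.
Qed.

Lemma root_fix_bound i : (M * #|root_fix i| <= #|S|)%N.
Proof. by rewrite /root_fix; case: ifP => _; rewrite ?xloc_fix // cards1 muln1 M_le_S. Qed.

Lemma card_N : #|N| = (#|S| ^ t)%N.
Proof.
rewrite -(bigdprod_card defN) (eq_bigr (fun _ => #|S|)) => [|i _]; last exact: card_isog.
by rewrite prod_nat_const card_ord.
Qed.

(* The class of g under Inn(N) has at least M^t elements: by the class equation it
   suffices that M^t #|C_N(g)| <= #|N|. *)
Lemma class_corr_aut_bound : (M ^ t <= #|corr_aut ^: Inn N|)%N.
Proof.
have fix_gt0 : (0 < #|fixset N corr_aut|)%N.
  by apply/card_gt0P; exists 1; rewrite inE group1 -(autmE Aut_corr_aut) morph1 eqxx.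
rewrite -(leq_pmul2r fix_gt0) card_class_Inn ?Aut_corr_aut ?(center_N defN simT nabT) //.
rewrite card_N (leq_trans (leq_mul (leqnn _) card_fixset_corr_aut)) //.
have pow_prod k : (k ^ t = \prod_(i < t) k)%N by rewrite prod_nat_const card_ord.
rewrite !pow_prod -big_split /=.
by apply: leq_prod => i _; apply: root_fix_bound.
Qed.

Lemma Ord_coset_bound : (M ^ t <= #|Ord (Inn N :* a) p|)%N.
Proof.
rewrite (leq_trans class_corr_aut_bound) ?subset_leq_card //.
exact: class_Inn_Ord AutNa corr_aut_coset corr_aut_p_elt.
Qed.

End Construction.

(* f_p(N) is a minimum over the p-elements a of Aut(N), each term bounded below by
   Ord_coset_bound; the default value #|Inn N| bounds the term for a = 1. *)
Theorem lemma2p2 (gT hT : finGroupType) (S : {group gT}) (t p M : nat)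
    (N : {group hT}) (T : 'I_t -> {group hT}) :
  simple S -> ~~ abelian S -> 0 < t -> prime p ->
  \big[dprod/1]_(i < t) T i = N ->
  (forall i, T i \isog S) ->
  (forall b, b \in Aut S ->
     exists2 x, x \in Inn S :* b & p.-elt x && (M <= #|x ^: Inn S|)) ->
  M ^ t <= f_p N p.
Proof.
move=> simS nabS _ _ defN isoT cosetS; rewrite /f_p.
have bound := Ord_coset_bound simS nabS defN isoT cosetS.
apply: (big_rec (fun k => M ^ t <= k)) => [|a k /andP[AutNa pa] Mk].
  have p1 : p.-elt (1 : {perm hT}) by apply: p_elt1.
  rewrite (leq_trans (bound 1 (group1 _) p1)) ?subset_leq_card //.
  by rewrite rcoset1; apply/subsetP=> x /setIdP[].
by rewrite leq_min Mk andbT bound.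
Qed.
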